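(* Let $F$ be WORDER or WMAJORITY with weights $w_1\ge\dots\ge w_n>0$, and run SMO-GP-single on MO-$F$ starting from a non-redundant initial tree. Then at every iteration every tree in the population is non-redundant, and the population has at most $n+1$ elements.
   Context: Fix an integer $n\ge 1$ and real weights $w_1\ge w_2\ge\dots\ge w_n>0$. The terminal set is $T=\{x_1,\bar x_1,\dots,x_n,\bar x_n\}$ ($\bar x_i$ is the complement of $x_i$; $x_i$ is called positive). A syntax tree is either the empty tree or a rooted ordered binary tree whose inner nodes are all labelled by the binary function $J$ (join, exactly two ordered children) and whose leaves are labelled by elements of $T$. The complexity $C(X)$ is the number of nodes of $X$ (0 for the empty tree). The leaf list $l$ of $X$ is the sequence of leaf labels in an inorder traversal. WORDER: build a list $S$ by scanning $l$ from front to rear and appending a literal only if neither it nor its complement is already in $S$; WORDER$(X)=\sum_{i:\,x_i\in S} w_i$; the expressed variables are the $x_i\in S$. WMAJORITY: WMAJORITY$(X)=\sum w_i$ over all $i$ such that $x_i$ occurs in $l$ at least once and at least as often as $\bar x_i$; these $x_i$ are the expressed variables. A tree is non-redundant if it is empty or if, with $k$ its number of expressed variables, its complexity is $2k-1$. MO-$F(X)=(F(X),C(X))$, $F$ maximized and $C$ minimized. Mutation (one HVL-Prime application): choose uniformly at random one of three operations. Substitute: replace a uniformly random leaf by a uniformly random $u\in T$. Insert: choose a uniformly random node $v$ and uniformly random $u\in T$, replace $v$ by a $J$-node with children $u$ and $v$ in uniformly random order (inserting into the empty tree yields the single leaf $u$). Delete: choose a uniformly random leaf $v$ with parent $p$ and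 sibling $u$, replace $p$ by $u$ (deleting $p$ and $v$; deleting the only leaf of a one-leaf tree yields the empty tree). Dominance: $Y\succeq X$ iff $F(Y)\ge F(X)$ and $C(Y)\le C(X)$; $Y\succ X$ iff $Y\succeq X$ and ($F(Y)>F(X)$ or $C(Y)<C(X)$). SMO-GP-single: choose an initial tree $X$ and set $P:=\{X\}$; repeat: choose $X\in P$ uniformly at random, let $Y$ be $X$ after one HVL-Prime application; if no $Z\in P$ satisfies $Z\succ Y$, set $P:=(P\setminus\{Z\in P: Y\succeq Z\})\cup\{Y\}$. *)

From Stdlib Require Import Bool Reals List Arith Relations.
Import ListNotations.
Open Scope R_scope.

(* Variables are indexed 0 .. n-1 (paper: 1 .. n).
   A literal is (i, true) = x_i (positive) or (i, false) = complement of x_i. *)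
Definition lit : Type := (nat * bool)%type.
Definition compl (a : lit) : lit := (fst a, negb (snd a)).
Definition lit_eqb (a b : lit) : bool :=
  Nat.eqb (fst a) (fst b) && Bool.eqb (snd a) (snd b).
(* a belongs to the terminal set T = {x_1, bar x_1, ..., x_n, bar x_n} *)
Definition in_T (n : nat) (a : lit) : Prop := (fst a < n)%nat.

Inductive tree : Type :=
| Leaf : lit -> tree
| J : tree -> tree -> tree.

Definition stree : Type := option tree.

Fixpoint leaves (t : tree) : list lit :=
  match t with Leaf a => [a] | J l r => leaves l ++ leaves r end.
Definition leaf_list (X : stree) : list lit :=
  match X with None => [] | Some t => leaves t end.

Fixpoint nodes (t : tree) : nat :=
  match t with Leaf _ => 1 | J l r => S (nodes l + nodes r) end.
Definition C (X : stree) : nat :=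
  match X with None => 0 | Some t => nodes t end.

Definition valid (n : nat) (X : stree) : Prop :=
  forall a, In a (leaf_list X) -> in_T n a.

Inductive fitness_kind : Type := WORDER | WMAJORITY.

Definition worder_S (l : list lit) : list lit :=
  fold_left (fun S a =>
               if existsb (fun b => lit_eqb b a || lit_eqb b (compl a)) S
               then S else S ++ [a]) l [].

Definition occ (a : lit) (l : list lit) : nat := length (filter (lit_eqb a) l).

Definition expressed (k : fitness_kind) (X : stree) (i : nat) : bool :=
  match k with
  | WORDER => existsb (lit_eqb (i, true)) (worder_S (leaf_list X))
  | WMAJORITY =>
      let l := leaf_list X in
      Nat.leb 1 (occ (i, true) l) && Nat.leb (occ (i, false) l) (occ (i, true) l)
  end.

Definition F (k : fitness_kind) (n : nat) (w : nat -> R) (X : stree) : R :=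
  fold_right Rplus 0
    (map (fun i => if expressed k X i then w i else 0) (seq 0 n)).

Definition num_expressed (k : fitness_kind) (n : nat) (X : stree) : nat :=
  length (filter (expressed k X) (seq 0 n)).

(* non-redundant: empty, or complexity = 2k - 1 (written C + 1 = 2k) *)
Definition non_redundant (k : fitness_kind) (n : nat) (X : stree) : Prop :=
  X = None \/ (C X + 1 = 2 * num_expressed k n X)%nat.

Inductive subst_rel (n : nat) : tree -> tree -> Prop :=
| sub_leaf : forall a u, in_T n u -> subst_rel n (Leaf a) (Leaf u)
| sub_l : forall l l' r, subst_rel n l l' -> subst_rel n (J l r) (J l' r)
| sub_r : forall l r r', subst_rel n r r' -> subst_rel n (J l r) (J l r').

Inductive insert_rel (n : nat) : tree -> tree -> Prop :=
| ins_here_l : forall u v, in_T n u -> insert_rel n v (J (Leaf u) v)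
| ins_here_r : forall u v, in_T n u -> insert_rel n v (J v (Leaf u))
| ins_l : forall l l' r, insert_rel n l l' -> insert_rel n (J l r) (J l' r)
| ins_r : forall l r r', insert_rel n r r' -> insert_rel n (J l r) (J l r').

Inductive delete_rel : tree -> tree -> Prop :=
| del_here_l : forall a u, delete_rel (J (Leaf a) u) u
| del_here_r : forall a u, delete_rel (J u (Leaf a)) u
| del_l : forall l l' r, delete_rel l l' -> delete_rel (J l r) (J l' r)
| del_r : forall l r r', delete_rel r r' -> delete_rel (J l r) (J l r').

(* Y is a possible result (positive probability) of one HVL-Prime application to X. *)
Inductive mutate (n : nat) : stree -> stree -> Prop :=
| mut_subst : forall t t', subst_rel n t t' -> mutate n (Some t) (Some t')
| mut_insert : forall t t', insert_rel n t t' -> mutate n (Some t) (Some t')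
| mut_insert_empty : forall u, in_T n u -> mutate n None (Some (Leaf u))
| mut_delete : forall t t', delete_rel t t' -> mutate n (Some t) (Some t')
| mut_delete_single : forall a, mutate n (Some (Leaf a)) None
(* substitute / delete on the empty tree (no leaf to choose): no change *)
| mut_empty_noop : mutate n None None.

Definition wdom (k : fitness_kind) (n : nat) (w : nat -> R) (Y X : stree) : Prop :=
  F k n w Y >= F k n w X /\ (C Y <= C X)%nat.
Definition sdom (k : fitness_kind) (n : nat) (w : nat -> R) (Y X : stree) : Prop :=
  wdom k n w Y X /\ (F k n w Y > F k n w X \/ (C Y < C X)%nat).
Definition wdomb (k : fitness_kind) (n : nat) (w : nat -> R) (Y X : stree) : bool :=
  if Rge_dec (F k n w Y) (F k n w X) then Nat.leb (C Y) (C X) else false.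

Definition smo_step (k : fitness_kind) (n : nat) (w : nat -> R)
  (P P' : list stree) : Prop :=
  exists X Y, In X P /\ mutate n X Y /\
    ( ((~ exists Z, In Z P /\ sdom k n w Z Y) /\
        P' = Y :: filter (fun Z => negb (wdomb k n w Y Z)) P)
   \/ ((exists Z, In Z P /\ sdom k n w Z Y) /\ P' = P) ).

Definition reachable (k : fitness_kind) (n : nat) (w : nat -> R)
  (X0 : stree) (P : list stree) : Prop :=
  clos_refl_trans (list stree) (smo_step k n w) [X0] P.

From Pilot Require Import Defs.
From Stdlib Require Import Reals List Arith Relations Lia Lra Permutation Bool.
Import ListNotations.
Open Scope R_scope.

(* Call a leaf list *clean* when its literals are all positive,
   in range, and mention pairwise distinct variables.  For a clean list, under
   both WORDER and WMAJORITY, the expressed variables are exactly the variables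
   of its leaves; consequently a tree is non-redundant iff its leaf list is
   clean (given that its leaves lie in T), and a clean tree with k expressed
   variables has complexity 2k-1.
   Every HVL-Prime mutation only edits one position of the leaf list.  Applied
   to a clean tree X it yields either a clean tree, or a tree Y strictly
   dominated by X (an insertion that cannot add a new variable keeps F and
   raises C; a substitution that cannot add a new variable loses one).  Such a
   Y is rejected, since X is still in the population.  Hence all trees stay
   clean; two clean trees with the same number of expressed variables have the
   same complexity and are thus comparable, so population members have
   pairwise distinct numbers of expressed variables in {0, ..., n}: at most
   n+1 of them. *)

Lemma lit_eqb_eq (a b : lit) : lit_eqb a b = true <-> a = b.
Proof.
  destruct a as [x y], b as [x' y']; unfold lit_eqb; simpl.
  rewrite andb_true_iff, Nat.eqb_eq, eqb_true_iff.
  split; [intros [-> ->]; reflexivity | intros H; inversion H; auto].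
Qed.

Lemma lit_eq_dec (a b : lit) : {a = b} + {a <> b}.
Proof. decide equality; [apply bool_dec | apply Nat.eq_dec]. Qed.

Lemma nodes_leaves (t : tree) : (nodes t + 1 = 2 * length (leaves t))%nat.
Proof. induction t; simpl; [reflexivity | rewrite length_app; lia]. Qed.

Lemma C_leaf_list (X : stree) : Defs.C X = (2 * length (leaf_list X) - 1)%nat.
Proof. destruct X as [t|]; simpl; [pose proof (nodes_leaves t); lia | reflexivity]. Qed.

Lemma in_mid {A} (l1 l2 : list A) x y :
  In y (l1 ++ x :: l2) <-> x = y \/ In y (l1 ++ l2).
Proof. rewrite !in_app_iff; simpl; tauto. Qed.

Lemma NoDup_mid {A} (l1 l2 : list A) x :
  NoDup (l1 ++ x :: l2) <-> ~ In x (l1 ++ l2) /\ NoDup (l1 ++ l2).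
Proof.
  split.
  - intro H; split; [apply NoDup_remove_2 in H | apply NoDup_remove_1 in H]; auto.
  - intros [H1 H2]. eapply Permutation_NoDup; [apply Permutation_middle|].
    constructor; auto.
Qed.

Lemma NoDup_map_filter {A B} (f : A -> B) (g : A -> bool) (l : list A) :
  NoDup (map f l) -> NoDup (map f (filter g l)).
Proof.
  induction l as [|a l IH]; simpl; intros H; auto. inversion H; subst.
  destruct (g a); simpl; auto. constructor; auto.
  intro Hin; apply H2. apply in_map_iff in Hin as (x & Hx & Hin).
  apply filter_In in Hin. apply in_map_iff; exists x; tauto.
Qed.

Definition expressed_in (k : fitness_kind) (l : list lit) (i : nat) : bool :=
  match k with
  | WORDER => existsb (lit_eqb (i, true)) (worder_S l)
  | WMAJORITY => Nat.leb 1 (occ (i, true) l) && Nat.leb (occ (i, false) l) (occ (i, true) l)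
  end.

Definition worder_step (S : list lit) (a : lit) : list lit :=
  if existsb (fun b => lit_eqb b a || lit_eqb b (compl a)) S then S else S ++ [a].

Lemma worder_scan_incl (l S : list lit) x :
  In x (fold_left worder_step l S) -> In x S \/ In x l.
Proof.
  revert S; induction l as [|a l IH]; intros S H; simpl in *; [auto|].
  unfold worder_step at 2 in H.
  destruct (existsb _ S); destruct (IH _ H) as [H1|H1]; auto.
  apply in_app_or in H1 as [H1|[H1|[]]]; auto.
Qed.

Lemma worder_scan_distinct (l S : list lit) :
  NoDup (map fst (S ++ l)) -> fold_left worder_step l S = S ++ l.
Proof.
  revert S; induction l as [|a l IH]; intros S H; simpl; [now rewrite app_nil_r|].
  unfold worder_step at 2.
  destruct (existsb _ S) eqn:E.
  - exfalso. apply existsb_exists in E as (b & Hb & Hba).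
    rewrite map_app in H; simpl in H. apply NoDup_remove_2 in H.
    apply H, in_or_app; left. apply in_map_iff. exists b; split; auto.
    apply orb_true_iff in Hba as [Hba|Hba]; apply lit_eqb_eq in Hba; subst; reflexivity.
  - rewrite IH, <- app_assoc; [reflexivity|]. now rewrite <- app_assoc.
Qed.

Lemma occ_eq_0 (a : lit) (l : list lit) : occ a l = 0%nat <-> ~ In a l.
Proof.
  unfold occ; induction l as [|b l IH]; simpl; [tauto|].
  destruct (lit_eqb a b) eqn:E; simpl.
  - apply lit_eqb_eq in E; subst. split; [discriminate | tauto].
  - rewrite IH. assert (b <> a) by (intros <-; rewrite (proj2 (lit_eqb_eq b b) eq_refl) in E; discriminate).
    tauto.
Qed.

Lemma expressed_in_positive (k : fitness_kind) (l : list lit) (i : nat) :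
  expressed_in k l i = true -> In (i, true) l.
Proof.
  destruct k; unfold expressed_in; intro H.
  - apply existsb_exists in H as (x & Hx & Hix). apply lit_eqb_eq in Hix; subst.
    destruct (worder_scan_incl _ _ _ Hx) as [[]|]; auto.
  - apply andb_true_iff in H as [H _]. apply Nat.leb_le in H.
    destruct (in_dec lit_eq_dec (i, true) l) as [Hin|Hnin]; auto.
    apply occ_eq_0 in Hnin; lia.
Qed.

Definition clean (n : nat) (l : list lit) : Prop :=
  NoDup (map fst l) /\ forall a, In a l -> snd a = true /\ (fst a < n)%nat.

Lemma clean_expressed (k : fitness_kind) (n : nat) (l : list lit) (i : nat) :
  clean n l -> In (i, true) l -> expressed_in k l i = true.
Proof.
  intros [Hnd Hall] Hi. destruct k; unfold expressed_in.
  - change (worder_S l) with (fold_left worder_step l []).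
    rewrite worder_scan_distinct by exact Hnd.
    apply existsb_exists. exists (i, true). split; auto. now apply lit_eqb_eq.
  - assert (Hneg : occ (i, false) l = 0%nat).
    { apply occ_eq_0. intro Hf. now destruct (Hall _ Hf). }
    assert (Hpos : occ (i, true) l <> 0%nat) by (rewrite occ_eq_0; tauto).
    rewrite Hneg. apply andb_true_iff; split; apply Nat.leb_le; lia.
Qed.

Lemma clean_var_positive (n : nat) (l : list lit) (i : nat) :
  clean n l -> In i (map fst l) -> In (i, true) l.
Proof.
  intros [_ Hall] H. apply in_map_iff in H as ([x b] & Hx & Hin). simpl in Hx; subst.
  destruct (Hall _ Hin) as [Hb _]. simpl in Hb; subst; auto.
Qed.

Lemma clean_remove (n : nat) (l1 l2 : list lit) (a : lit) :
  clean n (l1 ++ a :: l2) -> clean n (l1 ++ l2).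
Proof.
  intros [Hnd Hall]. rewrite map_app in Hnd; simpl in Hnd.
  apply NoDup_remove_1 in Hnd. split.
  - now rewrite map_app.
  - intros b Hb; apply Hall, in_mid; auto.
Qed.

Definition fresh (u : lit) (l : list lit) : Prop :=
  snd u = true /\ ~ In (fst u) (map fst l).

Lemma fresh_dec (u : lit) (l : list lit) : {fresh u l} + {~ fresh u l}.
Proof.
  unfold fresh. destruct (snd u); [|right; intros [H _]; discriminate].
  destruct (in_dec Nat.eq_dec (fst u) (map fst l)); [right | left]; tauto.
Qed.

Lemma clean_insert_fresh (n : nat) (l1 l2 : list lit) (u : lit) :
  clean n (l1 ++ l2) -> in_T n u -> fresh u (l1 ++ l2) -> clean n (l1 ++ u :: l2).
Proof.
  intros [Hnd Hall] Hu [Su Hnew]. split.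
  - rewrite map_app; simpl. apply NoDup_mid. rewrite <- map_app. auto.
  - intros b Hb. apply in_mid in Hb as [<-|Hb]; auto.
Qed.

Lemma insert_stale_expressed (k : fitness_kind) (n : nat) (l1 l2 : list lit) (u : lit) i :
  clean n (l1 ++ l2) -> ~ fresh u (l1 ++ l2) ->
  expressed_in k (l1 ++ u :: l2) i = true -> In (i, true) (l1 ++ l2).
Proof.
  intros Hc Hstale He. apply expressed_in_positive, in_mid in He as [Hu|He]; auto.
  subst u.
  apply (clean_var_positive n); auto.
  destruct (in_dec Nat.eq_dec i (map fst (l1 ++ l2))) as [Hin|Hnin]; auto.
  exfalso; apply Hstale; split; auto.
Qed.

Definition wsum (w : nat -> R) (e : nat -> bool) (s : list nat) : R :=
  fold_right Rplus 0 (map (fun i => if e i then w i else 0) s).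

Lemma wsum_le (w : nat -> R) (e e' : nat -> bool) (s : list nat) :
  (forall i, In i s -> 0 <= w i) -> (forall i, In i s -> e' i = true -> e i = true) ->
  wsum w e' s <= wsum w e s.
Proof.
  unfold wsum; induction s as [|a s IH]; simpl; intros Hw Hsub; [lra|].
  pose proof (IH (fun i Hi => Hw i (or_intror Hi)) (fun i Hi => Hsub i (or_intror Hi))).
  pose proof (Hw a (or_introl eq_refl)).
  destruct (e' a) eqn:E'; [rewrite (Hsub a (or_introl eq_refl) E'); lra|].
  destruct (e a); lra.
Qed.

Lemma wsum_lt (w : nat -> R) (e e' : nat -> bool) (s : list nat) (j : nat) :
  (forall i, In i s -> 0 <= w i) -> (forall i, In i s -> e' i = true -> e i = true) ->
  In j s -> 0 < w j -> e j = true -> e' j = false ->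
  wsum w e' s < wsum w e s.
Proof.
  unfold wsum; induction s as [|a s IH]; simpl; intros Hw Hsub Hj Hwj Hej Hej'; [destruct Hj|].
  pose proof (wsum_le w e e' s (fun i Hi => Hw i (or_intror Hi))
                (fun i Hi => Hsub i (or_intror Hi))) as Hle; unfold wsum in Hle.
  pose proof (Hw a (or_introl eq_refl)).
  destruct Hj as [<-|Hj].
  - rewrite Hej, Hej'. lra.
  - pose proof (IH (fun i Hi => Hw i (or_intror Hi)) (fun i Hi => Hsub i (or_intror Hi)) Hj Hwj Hej Hej').
    destruct (e' a) eqn:E'; [rewrite (Hsub a (or_introl eq_refl) E'); lra|].
    destruct (e a); lra.
Qed.

Definition fitness (k : fitness_kind) (n : nat) (w : nat -> R) (l : list lit) : R :=
  wsum w (expressed_in k l) (seq 0 n).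

Lemma F_fitness (k : fitness_kind) (n : nat) (w : nat -> R) (X : stree) :
  F k n w X = fitness k n w (leaf_list X).
Proof. reflexivity. Qed.

Section Fitness.
Variables (k : fitness_kind) (n : nat) (w : nat -> R).
Hypothesis Hpos : forall i, (i < n)%nat -> w i > 0.

Let w_nonneg : forall i, In i (seq 0 n) -> 0 <= w i.
Proof. intros i Hi; apply in_seq in Hi; apply Rlt_le, Hpos; lia. Qed.

Lemma fitness_le_covered (l l' : list lit) :
  clean n l -> (forall i, expressed_in k l' i = true -> In (i, true) l) ->
  fitness k n w l' <= fitness k n w l.
Proof.
  intros Hc Hcov. apply wsum_le; [exact w_nonneg|].
  intros i _ He. apply (clean_expressed k n); auto.
Qed.

Lemma fitness_lt_covered (l l' : list lit) (j : nat) :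
  clean n l -> (forall i, expressed_in k l' i = true -> In (i, true) l) ->
  In (j, true) l -> ~ In (j, true) l' ->
  fitness k n w l' < fitness k n w l.
Proof.
  intros Hc Hcov Hj Hj'.
  assert (Hjn : (j < n)%nat) by (apply (proj2 Hc _ Hj)).
  apply wsum_lt with (j := j); [exact w_nonneg | | apply in_seq; lia | apply Hpos; lia | |].
  - intros i _ He. apply (clean_expressed k n); auto.
  - apply (clean_expressed k n); auto.
  - destruct (expressed_in k l' j) eqn:E; auto.
    now apply expressed_in_positive in E.
Qed.

Lemma insert_clean_or_le (l1 l2 : list lit) (u : lit) :
  clean n (l1 ++ l2) -> in_T n u ->
  clean n (l1 ++ u :: l2) \/ fitness k n w (l1 ++ u :: l2) <= fitness k n w (l1 ++ l2).
Proof.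
  intros Hc Hu. destruct (fresh_dec u (l1 ++ l2)) as [Hf|Hstale].
  - left; now apply clean_insert_fresh.
  - right; apply fitness_le_covered; auto.
    intros i; now apply (insert_stale_expressed k n).
Qed.

(* Substituting a literal in a clean list keeps it clean or strictly decreases fitness:
   the variable of the replaced literal is no longer expressed. *)
Lemma substitute_clean_or_lt (l1 l2 : list lit) (a u : lit) :
  clean n (l1 ++ a :: l2) -> in_T n u ->
  clean n (l1 ++ u :: l2) \/ fitness k n w (l1 ++ u :: l2) < fitness k n w (l1 ++ a :: l2).
Proof.
  intros Hc Hu. pose proof (clean_remove _ _ _ _ Hc) as Hc'.
  destruct (lit_eq_dec u a) as [->|Hne]; [now left|].
  destruct (fresh_dec u (l1 ++ l2)) as [Hf|Hstale]; [left; now apply clean_insert_fresh|].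
  right. pose proof Hc as [Hnd Hall].
  assert (Ha : a = (fst a, true)).
  { destruct (Hall a) as [Sa _]; [apply in_mid; auto|]. destruct a; simpl in *; now subst. }
  rewrite map_app in Hnd; simpl in Hnd. apply NoDup_remove_2 in Hnd. rewrite <- map_app in Hnd.
  apply fitness_lt_covered with (j := fst a); [exact Hc | | |].
  - intros i He. apply in_mid; right. now apply (insert_stale_expressed k n l1 l2 u).
  - rewrite <- Ha. apply in_mid; auto.
  - intros Hin. apply in_mid in Hin as [Hua|Hin]; [apply Hne; congruence|].
    apply Hnd, in_map_iff. exists (fst a, true); auto.
Qed.

End Fitness.

Lemma subst_leaves (n : nat) (t t' : tree) : subst_rel n t t' ->
  exists l1 l2 a u, leaves t = l1 ++ a :: l2 /\ leaves t' = l1 ++ u :: l2 /\ in_T n u.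
Proof.
  induction 1 as [a u Hu| l l' r _ (l1&l2&a&u&E1&E2&Hu) | l r r' _ (l1&l2&a&u&E1&E2&Hu)].
  - exists [], [], a, u; simpl; auto.
  - exists l1, (l2 ++ leaves r), a, u. simpl. rewrite E1, E2, <- !app_assoc. auto.
  - exists (leaves l ++ l1), l2, a, u. simpl. rewrite E1, E2, !app_assoc. auto.
Qed.

Lemma insert_leaves (n : nat) (t t' : tree) : insert_rel n t t' ->
  exists l1 l2 u, leaves t = l1 ++ l2 /\ leaves t' = l1 ++ u :: l2 /\ in_T n u.
Proof.
  induction 1 as [u v Hu | u v Hu | l l' r _ (l1&l2&u&E1&E2&Hu) | l r r' _ (l1&l2&u&E1&E2&Hu)].
  - exists [], (leaves v), u; simpl; auto.
  - exists (leaves v), [], u; simpl; rewrite app_nil_r; auto.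
  - exists l1, (l2 ++ leaves r), u. simpl. rewrite E1, E2, <- !app_assoc. auto.
  - exists (leaves l ++ l1), l2, u. simpl. rewrite E1, E2, !app_assoc. auto.
Qed.

Lemma delete_leaves (t t' : tree) : delete_rel t t' ->
  exists l1 l2 a, leaves t = l1 ++ a :: l2 /\ leaves t' = l1 ++ l2.
Proof.
  induction 1 as [a u | a u | l l' r _ (l1&l2&a&E1&E2) | l r r' _ (l1&l2&a&E1&E2)].
  - exists [], (leaves u), a; simpl; auto.
  - exists (leaves u), [], a; simpl; rewrite app_nil_r; auto.
  - exists l1, (l2 ++ leaves r), a. simpl. rewrite E1, E2, <- !app_assoc. auto.
  - exists (leaves l ++ l1), l2, a. simpl. rewrite E1, E2, !app_assoc. auto.
Qed.

Lemma mutation_clean_or_dominated (k : fitness_kind) (n : nat) (w : nat -> R) (X Y : stree) :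
  (forall i, (i < n)%nat -> w i > 0) ->
  clean n (leaf_list X) -> mutate n X Y -> clean n (leaf_list Y) \/ sdom k n w X Y.
Proof.
  intros Hw Hc HM. unfold sdom, wdom. rewrite !F_fitness, !C_leaf_list.
  destruct HM as [t t' H | t t' H | u Hu | t t' H | a |]; simpl in *.
  - apply subst_leaves in H as (l1&l2&a&u&E1&E2&Hu). rewrite E1 in *; rewrite E2.
    destruct (substitute_clean_or_lt k n w Hw l1 l2 a u Hc Hu) as [H|H]; [now left|right].
    rewrite !length_app; simpl. split; [split; [lra|lia] | left; lra].
  - apply insert_leaves in H as (l1&l2&u&E1&E2&Hu). rewrite E1 in *; rewrite E2.
    destruct (insert_clean_or_le k n w Hw l1 l2 u Hc Hu) as [H|H]; [now left|right].
    rewrite !length_app; simpl. split; [split; [lra|lia] | right; lia].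
  - destruct (insert_clean_or_le k n w Hw [] [] u Hc Hu) as [H|H]; [now left|right].
    simpl in H. split; [split; [lra|lia] | right; lia].
  - apply delete_leaves in H as (l1&l2&a&E1&E2). rewrite E1 in *; rewrite E2.
    left; eapply clean_remove; eauto.
  - left; split; [constructor | intros b []].
  - now left.
Qed.

Lemma count_expressed_clean (k : fitness_kind) (n : nat) (l : list lit) :
  clean n l -> length (filter (expressed_in k l) (seq 0 n)) = length l.
Proof.
  intros Hc. transitivity (length (map fst l)); [|apply length_map].
  apply Nat.le_antisymm.
  - apply NoDup_incl_length; [apply NoDup_filter, seq_NoDup|].
    intros i Hi. apply filter_In in Hi as [_ Hi]. apply expressed_in_positive in Hi.
    apply in_map_iff. exists (i, true); auto.
  - apply NoDup_incl_length; [apply Hc|].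
    intros i Hi. apply (clean_var_positive n) in Hi; auto. apply filter_In. split.
    + apply in_seq. destruct (proj2 Hc _ Hi) as [_ Hlt]; simpl in Hlt; lia.
    + now apply (clean_expressed k n).
Qed.

Lemma num_expressed_clean (k : fitness_kind) (n : nat) (X : stree) :
  clean n (leaf_list X) -> num_expressed k n X = length (leaf_list X).
Proof. apply count_expressed_clean. Qed.

Lemma clean_non_redundant (k : fitness_kind) (n : nat) (X : stree) :
  clean n (leaf_list X) -> non_redundant k n X.
Proof.
  intros Hc. destruct X as [t|]; [right | now left].
  rewrite num_expressed_clean by exact Hc. apply nodes_leaves.
Qed.

(* Conversely a non-redundant tree over T is clean: it needs one expressed
   variable per leaf, which forces distinct positive literals. *)
Lemma non_redundant_clean (k : fitness_kind) (n : nat) (X : stree) :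
  valid n X -> non_redundant k n X -> clean n (leaf_list X).
Proof.
  intros Hv [->|Hnr]; [split; [constructor | intros b []]|].
  destruct X as [t|]; [|split; [constructor | intros b []]].
  simpl in Hnr. pose proof (nodes_leaves t) as Hl. simpl in Hv |- *.
  change (num_expressed k n (Some t)) with
    (length (filter (expressed_in k (leaves t)) (seq 0 n))) in Hnr.
  set (l := leaves t) in *. set (E := filter (expressed_in k l) (seq 0 n)) in *.
  assert (HE : NoDup E) by apply NoDup_filter, seq_NoDup.
  assert (Hsub : forall q, (forall a, In a l -> snd a = true -> In a q) -> incl E (map fst q)).
  { intros q Hq i Hi. apply filter_In in Hi as [_ Hi]. apply expressed_in_positive in Hi.
    apply in_map_iff. exists (i, true); auto. }
  assert (Hpos : length l = length (filter snd l)).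
  { pose proof (filter_length_le snd l).
    pose proof (NoDup_incl_length HE (Hsub (filter snd l) (fun a Ha Hs => proj2 (filter_In _ _ _) (conj Ha Hs)))).
    rewrite length_map in *. unfold lit in *; lia. }
  symmetry in Hpos. apply filter_length_forallb in Hpos. rewrite forallb_forall in Hpos.
  split.
  - apply (NoDup_incl_NoDup HE); [| apply Hsub; auto].
    rewrite length_map. unfold lit in *; lia.
  - intros a Ha. split; [now apply Hpos | now apply Hv].
Qed.

Lemma clean_same_complexity (k : fitness_kind) (n : nat) (Y Z : stree) :
  clean n (leaf_list Y) -> clean n (leaf_list Z) ->
  num_expressed k n Y = num_expressed k n Z -> Defs.C Y = Defs.C Z.
Proof.
  intros HY HZ Heq. rewrite !C_leaf_list, <- !(num_expressed_clean k n) by auto.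
  now rewrite Heq.
Qed.

Definition good_population (k : fitness_kind) (n : nat) (P : list stree) : Prop :=
  (forall Z, In Z P -> clean n (leaf_list Z)) /\ NoDup (map (num_expressed k n) P).

(* One iteration preserves the invariant: a clean offspring Y can only be
   accepted, and then every survivor with Y's number of expressed variables,
   having the same complexity, would either be removed or strictly dominate Y. *)
Lemma smo_step_good (k : fitness_kind) (n : nat) (w : nat -> R) (P P' : list stree) :
  (forall i, (i < n)%nat -> w i > 0) ->
  good_population k n P -> smo_step k n w P P' -> good_population k n P'.
Proof.
  intros Hw [Hcl HP] (X & Y & HX & HM & [[Hacc ->] | [_ ->]]); [|now split].
  destruct (mutation_clean_or_dominated k n w X Y Hw (Hcl X HX) HM) as [HY|Hdom];
    [|exfalso; apply Hacc; now exists X].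
  split.
  - intros Z [<-|HZ]; [exact HY|]. apply filter_In in HZ; apply Hcl; tauto.
  - simpl; constructor; [|now apply NoDup_map_filter].
    intros Hin. apply in_map_iff in Hin as (Z & HeZ & HZ).
    apply filter_In in HZ as [HZP Hsurv].
    assert (HCZ : Defs.C Z = Defs.C Y) by (apply (clean_same_complexity k n); auto).
    (* Z survived, so Y does not weakly dominate it: Z is strictly fitter than Y. *)
    unfold wdomb in Hsurv. destruct (Rge_dec (F k n w Y) (F k n w Z)) as [_|Hlt].
    + rewrite HCZ, Nat.leb_refl in Hsurv; discriminate.
    + apply Hacc. exists Z. split; auto. apply Rnot_ge_lt in Hlt.
      unfold sdom, wdom. split; [split; [lra|lia] | left; lra].
Qed.

Lemma reachable_good (k : fitness_kind) (n : nat) (w : nat -> R) (P P' : list stree) :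
  (forall i, (i < n)%nat -> w i > 0) ->
  clos_refl_trans (list stree) (smo_step k n w) P P' ->
  good_population k n P -> good_population k n P'.
Proof.
  intros Hw H; induction H; auto. intro; eapply smo_step_good; eauto.
Qed.

(* A good population has at most n+1 members: their numbers of expressed
   variables are distinct values in {0, ..., n}. *)
Lemma good_population_length (k : fitness_kind) (n : nat) (P : list stree) :
  good_population k n P -> (length P <= n + 1)%nat.
Proof.
  intros [_ Hnd]. rewrite <- (length_map (num_expressed k n) P), <- (length_seq (n + 1) 0).
  apply NoDup_incl_length; auto.
  intros m Hm. apply in_map_iff in Hm as (Z & <- & _). apply in_seq.
  unfold num_expressed. pose proof (filter_length_le (expressed k Z) (seq 0 n)).
  rewrite length_seq in *. lia.
Qed.

Theorem mainTheorem10 (k : fitness_kind) (n : nat) (w : nat -> R)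
  (Hn : (1 <= n)%nat)
  (Hmono : forall i, (S i < n)%nat -> w i >= w (S i))
  (Hpos : forall i, (i < n)%nat -> w i > 0)
  (X0 : stree) (HX0 : valid n X0) (HX0nr : non_redundant k n X0) :
  forall P, reachable k n w X0 P ->
    (forall Z, In Z P -> non_redundant k n Z) /\ (length P <= n + 1)%nat.
Proof.
  intros P HP.
  assert (Hgood : good_population k n P).
  { apply (reachable_good k n w [X0]); auto. split.
    - intros Z [<-|[]]. now apply (non_redundant_clean k).
    - constructor; [intros [] | constructor]. }
  split.
  - intros Z HZ. exact (clean_non_redundant k n Z (proj1 Hgood Z HZ)).
  - exact (good_population_length k n P Hgood).
Qed.
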